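(* Let $X$ be a compact Hausdorff space and $\varphi:X\to X$ a homeomorphism. If $x\in X$ is aperiodic, then the representation $\pi_x$ of the semicrossed product $C(X)\rtimes_\varphi\mathbb{Z}^+$ on $\ell^2(\mathbb{N})$ is a nest representation.
   Context: Semicrossed product: let $\mathcal{A}_0$ be the algebra generated by $C(X)$ and a symbol $U$ subject to $fU=U(f\circ\varphi)$, with elements $\sum_{n=0}^NU^nf_n$; $C(X)\rtimes_\varphi\mathbb{Z}^+$ is its completion in the norm given by the supremum of $\|\pi(F)\|$ over homomorphisms $\pi$ into $\mathcal{B}(\mathcal{H})$ that are $*$-representations on $C(X)$ with $\pi(U)$ an isometry. For $x\in X$ set $x_n=\varphi^{n-1}(x)$, $n\ge1$, and define $\pi_x$ on $\ell^2(\mathbb{N})$ by $\pi_x(f)(z_1,z_2,\dots)=(f(x_1)z_1,f(x_2)z_2,\dots)$ and $\pi_x(U)(z_1,z_2,\dots)=(0,z_1,z_2,\dots)$. A point $x$ is aperiodic if $\varphi^n(x)\neq x$ for all $n\ge1$. A representation is a nest representation if the lattice of closed subspaces invariant under it is linearly ordered by inclusion. *)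

From HB Require Import structures.
From mathcomp Require Import all_boot all_order all_algebra.
From mathcomp Require Import all_classical all_reals all_analysis.
From mathcomp.real_closed Require Import complex.
Set Implicit Arguments. Unset Strict Implicit. Unset Printing Implicit Defensive.
Import Order.TTheory GRing.Theory Num.Theory.
Import numFieldNormedType.Exports.
Local Open Scope ring_scope.
Local Open Scope classical_set_scope.

Section Defs.
Variable R : realType.
Local Notation C := (R[i])%C.

Definition ccontinuous (X : topologicalType) (f : X -> C) : Prop :=
  continuous (fun x => complex.Re (f x)) /\ continuous (fun x => complex.Im (f x)).

Definition compact_hausdorff (X : topologicalType) : Prop :=
  compact [set: X] /\ hausdorff_space X.

Definition homeomorphism (X : topologicalType) (phi : X -> X) : Prop :=
  continuous phi /\ exists psi : X -> X,
    [/\ cancel phi psi, cancel psi phi & continuous psi].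

Definition aperiodic (X : Type) (phi : X -> X) (x : X) : Prop :=
  forall n : nat, (0 < n)%N -> iter n phi x <> x.

Definition l2 : set (nat -> C) :=
  [set z | cvgn (series (fun k => Normc.normc (z k) ^+ 2 : R)) ].

Definition l2dist2 (z w : nat -> C) : R :=
  limn (series (fun k => Normc.normc (z k - w k) ^+ 2 : R)).

Definition closed_subspace (M : set (nat -> C)) : Prop :=
  [/\ M `<=` l2,
      M (fun _ => 0),
      (forall z w, M z -> M w -> M (fun k => z k + w k)),
      (forall (a : C) z, M z -> M (fun k => a * z k)) &
      (forall (w : nat -> nat -> C) (z : nat -> C),
          (forall j, M (w j)) -> l2 z ->
          (l2dist2 (w j) z @[j --> \oo] --> 0) -> M z) ].

(* the operators pi_x(f) and pi_x(U) on sequences; coordinate k (0-based)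
   corresponds to x_{k+1} = phi^k(x) *)
Definition pi_f (X : Type) (phi : X -> X) (x : X) (f : X -> C)
  (z : nat -> C) : nat -> C := fun k => f (iter k phi x) * z k.

Definition pi_U (z : nat -> C) : nat -> C :=
  fun k => if k is k'.+1 then z k' else 0.

(* elements of the dense algebra A_0: sum_{n=0}^N U^n f_n, given by the
   list [f_0; ...; f_N] of continuous functions *)
Definition A0_elt (X : topologicalType) (F : seq (X -> C)) : Prop :=
  forall f, f \in F -> ccontinuous f.

Definition pi_A0 (X : Type) (phi : X -> X) (x : X) (F : seq (X -> C))
  (z : nat -> C) : nat -> C :=
  fun k => \sum_(n < size F) iter n pi_U (pi_f phi x (nth (fun _ => 0) F n) z) k.

Definition invariant_subspace (X : topologicalType) (phi : X -> X) (x : X)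
  (M : set (nat -> C)) : Prop :=
  closed_subspace M /\
  forall F : seq (X -> C), A0_elt F -> forall z, M z -> M (pi_A0 phi x F z).

Definition nest_rep (X : topologicalType) (phi : X -> X) (x : X) : Prop :=
  forall M N, invariant_subspace phi x M -> invariant_subspace phi x N ->
    M `<=` N \/ N `<=` M.
End Defs.

From mathcomp Require Import all_boot all_order all_algebra.
From mathcomp Require Import all_classical all_reals all_analysis.
From mathcomp.real_closed Require Import complex.
Set Implicit Arguments. Unset Strict Implicit. Unset Printing Implicit Defensive.
Import Order.TTheory GRing.Theory Num.Theory.
Import numFieldNormedType.Exports.
Local Open Scope ring_scope.
Local Open Scope classical_set_scope.

(* Let V_k be the square-summable sequences vanishing below k; these form a
   decreasing chain.  If an invariant subspace M contains z with
   z_k <> 0, multiply z by Urysohn functions g_n equal to 1 at x_k and to 0 at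
   the other x_j, j < n (these points are distinct since x is aperiodic): the
   results converge to z_k e_k, so e_k lies in M.  Applying U gives all e_j,
   j >= k, and closedness gives V_k <= M.  Hence if z is in M but not in N and
   k is the first index with z_k <> 0, every w in N vanishes below k (otherwise
   z would already be in N), so N <= V_k <= M. *)

Lemma lim_series_tail_cvg0 (R : realType) (u : nat -> R) (v : nat -> nat -> R) :
  (forall j, 0 <= u j) -> cvgn (series u) ->
  (forall n j, 0 <= v n j) -> (forall n j, (j < n)%N -> v n j = 0) ->
  (forall n j, v n j <= u j) ->
  limn (series (v n)) @[n --> \oo] --> 0.
Proof.
move=> u0 cu v0 vlt vle.
(* [0 <= \sum_j v n j <= \sum_(j >= n) u j], a tail of a convergent series. *)
have cv n : cvgn (series (v n)) by exact: series_le_cvg (v0 n) u0 (vle n) cu.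
apply: (@squeeze_cvgr _ _ _ _ (fun _ => 0) (fun n => limn (series u) - series u n)).
- near=> n; apply/andP; split.
    by apply: limr_ge => //; near=> m; apply: sumr_ge0 => *; exact: v0.
  have -> : limn (series u) - series u n = limn (series u - cst (series u n)).
    rewrite limB //; [by rewrite lim_cst | exact: is_cvg_cst].
  apply: ler_lim => //; first by apply: is_cvgB => //; exact: is_cvg_cst.
  near=> m; have nm : (n <= m)%N by near: m; exact: nbhs_infty_ge.
  rewrite -[X in _ <= X]/(series u m - series u n) sub_series_geq // seriesEnat.
  rewrite /= (@big_cat_nat _ _ _ n 0 m _ _ (leq0n n) nm) /=.
  rewrite [X in X + _]big_nat big1 ?add0r => [|k /andP[_ kn]]; last exact: vlt.
  by apply: ler_sum_nat => k _; exact: vle.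
- exact: cvg_cst.
- by rewrite -(subrr (limn (series u))); apply: cvgB => //; exact: cvg_cst.
Unshelve. all: by end_near. Qed.

Section SquareSummable.
Variable R : realType.
Local Notation C := (R[i])%C.

Lemma normc_ge0 (c : C) : 0 <= Normc.normc c.
Proof. by case: c => a b; exact: sqrtr_ge0. Qed.

Lemma normc_real (r : R) : Normc.normc (r%:C)%C = `|r|.
Proof. by rewrite /= expr0n /= addr0 sqrtr_sqr. Qed.

Lemma l2_normc_le (z t : nat -> C) :
  l2 z -> (forall j, Normc.normc (t j) <= Normc.normc (z j)) -> l2 t.
Proof.
move=> lz le; apply: (series_le_cvg _ _ _ lz) => j; rewrite ?exprn_ge0 ?normc_ge0 //.
by rewrite !expr2 ler_pM // normc_ge0.
Qed.

Lemma l2dist2_tail_cvg0 (z t : nat -> C) (w : nat -> nat -> C) :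
  l2 z -> (forall n j, (j < n)%N -> w n j = t j) ->
  (forall n j, Normc.normc (w n j - t j) <= Normc.normc (z j)) ->
  l2dist2 (w n) t @[n --> \oo] --> 0.
Proof.
move=> lz wt wz; apply: (lim_series_tail_cvg0 (u := fun k => Normc.normc (z k) ^+ 2)).
- by move=> j; rewrite exprn_ge0 ?normc_ge0.
- exact: lz.
- by move=> n j; rewrite exprn_ge0 ?normc_ge0.
- by move=> n j /wt ->; rewrite subrr Normc.normc0 expr0n.
- by move=> n j; rewrite !expr2 ler_pM // normc_ge0.
Qed.

Definition ebasis (k : nat) : nat -> C := fun j => if j == k then 1 else 0.

Definition vanishing_below (k : nat) (z : nat -> C) : Prop :=
  forall j, (j < k)%N -> z j = 0.

Lemma first_nonzero_coord (z : nat -> C) :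
  z <> (fun _ => 0) -> exists k, z k != 0 /\ vanishing_below k z.
Proof.
move=> z0; have [i zi] : exists i, z i != 0.
  apply: contrapT => /forallNP zx; apply/z0/funext => j.
  by apply/eqP; apply: contrapT => /negP; exact: zx.
case: (ex_minnP (ex_intro (fun i => z i != 0) i zi)) => k zk kmin.
exists k; split=> // j jk.
by apply/eqP; apply: contraTT jk => /kmin; rewrite -leqNgt.
Qed.

Lemma pi_U_ebasis k : pi_U (ebasis k) = ebasis k.+1.
Proof. by apply/funext; case. Qed.

Lemma closed_subspace_vanishing_below (M : set (nat -> C)) k z :
  closed_subspace M -> (forall j, (k <= j)%N -> M (ebasis j)) ->
  l2 z -> vanishing_below k z -> M z.
Proof.
move=> [_ M0 MD MZ Mlim] Me lz zk.
pose trunc n j := if (j < n)%N then z j else 0.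
have Mtrunc n : M (trunc n).
  elim: n => [|n IH]; first by have -> : trunc 0%N = (fun _ => 0) by apply/funext.
  have -> : trunc n.+1 = (fun j => trunc n j + z n * ebasis n j).
    apply/funext => j; rewrite /trunc /ebasis ltnS leq_eqVlt.
    by case: eqVneq => [->|] /=; rewrite ?ltnn ?add0r ?mulr1 ?mulr0 ?addr0.
  have [nk|kn] := ltnP n k; last by apply: MD => //; apply: MZ; exact: Me.
  by rewrite (zk n nk); under eq_fun do rewrite mul0r addr0.
apply: (Mlim trunc) => //; apply: (l2dist2_tail_cvg0 lz) => n j; rewrite /trunc.
  by move=> ->.
case: ifP => _; first by rewrite subrr Normc.normc0 normc_ge0.
by rewrite sub0r normcN.
Qed.

End SquareSummable.

Lemma separate_point_finite (R : realType) (X : topologicalType) (A : set X) (y : X) :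
  compact_hausdorff X -> finite_set A -> ~ A y ->
  exists g : X -> R,
    [/\ continuous g, forall t, 0 <= g t <= 1, g y = 1 & forall a, A a -> g a = 0].
Proof.
case=> cX hX finA Ay; have acc := hausdorff_accessible hX.
have clA : closed A by exact: (proj1 accessible_finite_set_closed acc).
have disj : A `&` [set y] = set0.
  by apply/seteqP; split => // a [Aa /= ay]; apply: Ay; rewrite -ay.
have := proj1 (@normal_separatorP R X) (compact_normal hX cX) _ _ clA
  (@accessible_closed_set1 _ acc y) disj.
move=> /(@uniform_separatorP X R) [g [cg g01 gA gy]]; exists g; split => //.
- by move=> t; have := g01 _ (imageT g t); rewrite /= in_itv.
- by apply: (gy (g y)); exists y.
- by move=> a Aa; apply: (gA (g a)); exists a.
Qed.

Lemma inj_iter (T : Type) (f : T -> T) n : injective f -> injective (iter n f).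
Proof. by move=> finj; elim: n => [//|n IH] a b /= /finj /IH. Qed.

Lemma aperiodic_orbit_inj (T : Type) (f : T -> T) (x : T) :
  injective f -> aperiodic f x -> injective (fun n => iter n f x).
Proof.
move=> finj ap i j; wlog ij : i j / (i <= j)%N.
  by move=> H; case: (leqP i j) => [|/ltnW] /H // + /esym => /[apply].
rewrite -(subnKC ij) iterD => /(inj_iter finj).
case: (j - i)%N => [|d] e; first by rewrite addn0.
by case: (ap d.+1).
Qed.

Section Orbit.
Variables (R : realType) (X : topologicalType) (phi : X -> X) (x : X).
Local Notation C := (R[i])%C.

Lemma ccontinuous_cst (c : C) : ccontinuous (fun _ : X => c).
Proof. by split; exact: cst_continuous. Qed.

Lemma ccontinuous_real (g : X -> R) : continuous g -> ccontinuous (fun y => (g y)%:C%C).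
Proof. by move=> cg; split => //=; exact: cst_continuous. Qed.

Lemma A0_elt_seq1 (f : X -> C) : ccontinuous f -> A0_elt [:: f].
Proof. by move=> cf g; rewrite mem_seq1 => /eqP ->. Qed.

Lemma A0_elt_seq2 (f g : X -> C) : ccontinuous f -> ccontinuous g -> A0_elt [:: f; g].
Proof. by move=> cf cg h; rewrite !inE => /orP[] /eqP ->. Qed.

Lemma pi_A0_seq1 (f : X -> C) z : pi_A0 phi x [:: f] z = pi_f phi x f z.
Proof. by apply/funext => k; rewrite /pi_A0 /= big_ord1. Qed.

Lemma pi_A0_U (z : nat -> C) : pi_A0 phi x [:: fun _ => 0; fun _ => 1] z = pi_U z.
Proof.
apply/funext => k; rewrite /pi_A0 /= big_ord_recr /= big_ord1 /= /pi_f /pi_U mul0r add0r.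
by case: k => //= k; rewrite mul1r.
Qed.

Lemma invariant_ebasis_ge (M : set (nat -> C)) k :
  invariant_subspace phi x M -> M (ebasis R k) -> forall j, (k <= j)%N -> M (ebasis R j).
Proof.
move=> [_ Minv] Mk j /subnKC <-; elim: (j - k)%N => [|n IH]; first by rewrite addn0.
rewrite addnS -pi_U_ebasis -pi_A0_U; apply: Minv => //.
by apply: A0_elt_seq2; exact: ccontinuous_cst.
Qed.

Hypothesis cX : compact_hausdorff X.
Hypothesis orbit_inj : injective (fun n => iter n phi x).

Lemma orbit_separator n k : exists g : X -> R,
  [/\ continuous g, forall t, 0 <= g t <= 1, g (iter k phi x) = 1 &
       forall j, (j < n)%N -> j != k -> g (iter j phi x) = 0].
Proof.
pose A := [set iter j phi x | j in [set j | (j < n)%N /\ j != k]].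
have finA : finite_set A.
  by apply: finite_image; apply: sub_finite_set (finite_II n) => j [].
have nAxk : ~ A (iter k phi x) by case=> j [_ /eqP jk] /orbit_inj.
have [g [cg g01 g1 g0]] := separate_point_finite R cX finA nAxk.
by exists g; split => // j jn jk; apply: g0; exists j.
Qed.

(* [pi_x(g_n)] kills the coordinates j < n, j <> k of [z] and fixes the k-th,
   so [pi_x(g_n) z] tends to [z_k e_k]. *)
Lemma invariant_ebasis_of_coord (M : set (nat -> C)) (z : nat -> C) k :
  invariant_subspace phi x M -> M z -> z k != 0 -> M (ebasis R k).
Proof.
move=> IM Mz zk; have [[Ml2 _ _ MZ Mlim] Minv] := IM.
have /choice [G HG] := orbit_separator^~ k.
pose t j := z k * ebasis R k j.
have lz := Ml2 _ Mz.
have Mt : M t.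
  apply: (Mlim (fun n => pi_A0 phi x [:: fun y => (G n y)%:C%C] z)).
  - move=> n; apply: Minv => //; apply: A0_elt_seq1; apply: ccontinuous_real.
    by case: (HG n).
  - apply: (l2_normc_le lz) => j; rewrite /t /ebasis.
    by case: eqVneq => [->|_]; rewrite ?mulr1 // mulr0 Normc.normc0 normc_ge0.
  apply: (l2dist2_tail_cvg0 lz) => n j; rewrite pi_A0_seq1 /pi_f /t /ebasis.
  - case: (HG n) => _ _ g1 g0; case: eqVneq => [->|jk jn]; first by rewrite g1 mul1r mulr1.
    by rewrite g0 // mul0r mulr0.
  - case: (HG n) => _ g01 g1 _; case: eqVneq => [->|_].
      by rewrite g1 mul1r mulr1 subrr Normc.normc0 normc_ge0.
    have /andP[g_ge0 g_le1] := g01 (iter j phi x).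
    by rewrite mulr0 subr0 Normc.normcM normc_real ger0_norm // ler_piMl // normc_ge0.
have -> : ebasis R k = (fun j => (z k)^-1 * t j) by apply/funext => j; rewrite mulKf.
exact: MZ.
Qed.

Lemma invariant_vanishing_below (M : set (nat -> C)) (z w : nat -> C) k :
  invariant_subspace phi x M -> M z -> z k != 0 ->
  l2 w -> vanishing_below k w -> M w.
Proof.
move=> IM Mz zk; apply: closed_subspace_vanishing_below IM.1 _.
exact: invariant_ebasis_ge IM (invariant_ebasis_of_coord IM Mz zk).
Qed.

End Orbit.

Theorem proposition1 (R : realType) (X : topologicalType) (phi : X -> X) (x : X) :
  compact_hausdorff X -> homeomorphism phi -> aperiodic phi x ->
  nest_rep R phi x.
Proof.
move=> cX [_ [psi [phiK _ _]]] ap M N IM IN.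
have inj := aperiodic_orbit_inj (can_inj phiK) ap.
have [[Ml2 _ _ _ _] _] := IM; have [[Nl2 N0 _ _ _] _] := IN.
have [MN|/existsNP[z /not_implyP[Mz Nz]]] := pselect (M `<=` N); [by left | right].
have [k [zk zvan]] : exists k, z k != 0 /\ vanishing_below k z.
  by apply: first_nonzero_coord => z0; apply: Nz; rewrite z0.
move=> w Nw; apply: (invariant_vanishing_below cX inj IM Mz zk (Nl2 _ Nw)).
move=> j jk; apply/eqP; apply: contrapT => /negP wj; apply: Nz.
apply: (invariant_vanishing_below cX inj IN Nw wj (Ml2 _ Mz)) => i ij.
exact: zvan (ltn_trans ij jk).
Qed.
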